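(* Let $\mathcal{A}\subseteq\mathbb{R}^3$ be measurable with finite positive measure, $k_0,\eta>0$, and for $k\in\{1,2\}$ let $\mathsf{G}_k\in L^2(\mathcal{A})$ with $\mathsf{g}_k=\int_{\mathcal{A}}|\mathsf{G}_k|^2>0$, $\mathsf{H}_k=\frac{\mathrm{j}k_0\eta}{\sqrt{4\pi}}\mathsf{G}_k$, $A_{\mathsf{u},k}>0$, $\sigma_k>0$, $\hat{\mathsf{H}}_k=\frac{\sqrt{A_{\mathsf{u},k}}}{\sigma_k}\mathsf{H}_k$, and let $\rho=\frac{\int_{\mathcal{A}}\mathsf{G}_1^*\mathsf{G}_2}{\sqrt{\mathsf{g}_1\mathsf{g}_2}}$. Let $\mathsf{P}>0$ and let $\mathsf{J}_{\mathsf{dl},1},\mathsf{J}_{\mathsf{dl},2}\in L^2(\mathcal{A})$ satisfy $\sum_{k=1}^2\int_{\mathcal{A}}|\mathsf{J}_{\mathsf{dl},k}|^2\le\mathsf{P}$. Define $$\mathsf{P}_2=\frac{|\int_{\mathcal{A}}\hat{\mathsf{H}}_2\mathsf{J}_{\mathsf{dl},2}|^2}{\int_{\mathcal{A}}|\hat{\mathsf{H}}_2|^2\,\big(1+|\int_{\mathcal{A}}\hat{\mathsf{H}}_2\mathsf{J}_{\mathsf{dl},1}|^2\big)},\qquad \mathsf{P}_1=\frac{|\int_{\mathcal{A}}\hat{\mathsf{H}}_1\mathsf{J}_{\mathsf{dl},1}|^2}{\int_{\mathcal{A}}|\hat{\mathsf{H}}_1|^2-\frac{\mathsf{P}_2|\int_{\mathcal{A}}\hat{\mathsf{H}}_1^*\hat{\mathsf{H}}_2|^2}{1+\mathsf{P}_2\int_{\mathcal{A}}|\hat{\mathsf{H}}_2|^2}},$$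 and $\overline{\gamma}_{k}=\frac{A_{\mathsf{u},k}k_0^2\eta^2}{4\pi\sigma_k^2}\mathsf{P}_k$. Then the dual uplink sum-rate with this power allocation (SIC order $1\rightarrow2$), $$\log_2\!\Big(1+\overline{\gamma}_1\mathsf{g}_1\Big(1-\tfrac{\overline{\gamma}_2\mathsf{g}_2|\rho|^2}{1+\overline{\gamma}_2\mathsf{g}_2}\Big)\Big)+\log_2(1+\overline{\gamma}_2\mathsf{g}_2),$$ equals the downlink sum-rate under dirty-paper coding with order $2\rightarrow1$, $$\log_2\Big(1+\Big|\int_{\mathcal{A}}\hat{\mathsf{H}}_1\mathsf{J}_{\mathsf{dl},1}\Big|^2\Big)+\log_2\Big(1+\frac{|\int_{\mathcal{A}}\hat{\mathsf{H}}_2\mathsf{J}_{\mathsf{dl},2}|^2}{1+|\int_{\mathcal{A}}\hat{\mathsf{H}}_2\mathsf{J}_{\mathsf{dl},1}|^2}\Big),$$ and $\mathsf{P}_1+\mathsf{P}_2\le\sum_{k=1}^2\int_{\mathcal{A}}|\mathsf{J}_{\mathsf{dl},k}|^2\le\mathsf{P}$.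
   Context: Integrals without variable are over $\mathbf{r}\in\mathcal{A}$. In the paper $\mathcal{A}$ is the base-station continuous aperture, $\mathsf{G}_k(\mathbf{r})=\frac{e^{-\mathrm{j}k_0\|\mathbf{r}-\mathbf{s}_k\|}}{\sqrt{4\pi}\|\mathbf{r}-\mathbf{s}_k\|}\sqrt{\frac{|\mathbf{e}^{\mathsf{T}}(\mathbf{s}_k-\mathbf{r})|}{\|\mathbf{r}-\mathbf{s}_k\|}}$ (user locations $\mathbf{s}_k\notin\overline{\mathcal{A}}$, aperture normal $\mathbf{e}$), $\mathsf{J}_{\mathsf{dl},k}$ are downlink source current distributions, $A_{\mathsf{u},k}$ user apertures and $\sigma_k^2$ noise intensities. *)

From HB Require Import structures.
From mathcomp Require Import all_boot all_order all_algebra.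
From mathcomp Require Import all_classical all_reals all_analysis.
From mathcomp Require Import complex.
Set Implicit Arguments.
Unset Strict Implicit.
Unset Printing Implicit Defensive.
Import Order.TTheory GRing.Theory Num.Theory.
Import numFieldNormedType.Exports.
Local Open Scope classical_set_scope.
Local Open Scope ring_scope.

Definition R3 (R : realType) := ((R * R) * R)%type.

Definition leb3 (R : realType) :=
  product_measure1
    (product_measure1 (@lebesgue_measure R) (@lebesgue_measure R))
    (@lebesgue_measure R).

Definition cabs2 (R : realType) (z : R[i]) : R := complex.Re z ^+ 2 + complex.Im z ^+ 2.

Definition cconj (R : realType) (z : R[i]) : R[i] := (complex.Re z +i* (- complex.Im z))%C.

Definition cL2 (R : realType) (A : set (R3 R)) (f : R3 R -> R[i]) : Prop :=
  [/\ measurable_fun A (fun x => complex.Re (f x)),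
      measurable_fun A (fun x => complex.Im (f x)) &
      (@leb3 R).-integrable A (fun x => (cabs2 (f x))%:E)].

Definition rint (R : realType) (A : set (R3 R)) (f : R3 R -> R) : R :=
  Rintegral (@leb3 R) A f.

Definition cint (R : realType) (A : set (R3 R)) (f : R3 R -> R[i]) : R[i] :=
  (rint A (fun x => complex.Re (f x)) +i* rint A (fun x => complex.Im (f x)))%C.

Definition log2 (R : realType) (x : R) : R := ln x / ln 2.

From HB Require Import structures.
From mathcomp Require Import all_boot all_order all_algebra.
From mathcomp Require Import all_classical all_reals all_analysis.
From mathcomp Require Import complex ring lra measurable_realfun.
Set Implicit Arguments.
Unset Strict Implicit.
Unset Printing Implicit Defensive.
Import Order.TTheory GRing.Theory Num.Theory.
Local Open Scope classical_set_scope.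
Local Open Scope ring_scope.

(* With h_k the normalized channels, the uplink power P_2 makes the SINR of
   user 2 the same in both directions, and P_1 times the MMSE-SIC gain
   h_1^H (I + P_2 h_2 h_2^H)^-1 h_1
     = ||h_1||^2 - P_2 |<h_1, h_2>|^2 / (1 + P_2 ||h_2||^2)
   is the downlink SINR |<h_1, J_1>|^2 of user 1, so the two sum rates agree
   term by term. The power bound is the Cauchy-Schwarz inequality for the
   positive semidefinite form <x, (I + P_2 h_2 h_2^H) y>, applied to
   (I + P_2 h_2 h_2^H)^-1 h_1 and J_1: it gives
   P_1 <= ||J_1||^2 + P_2 |<h_2, J_1>|^2, while plain Cauchy-Schwarz gives
   P_2 (1 + |<h_2, J_1>|^2) <= ||J_2||^2. *)

(** * Semi-inner products *)

Record semi_inner_product (C : numClosedFieldType) (U : lmodType C)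
    (form : U -> U -> C) : Prop := SemiInnerProduct {
  formDr : forall u v w, form u (v + w) = form u v + form u w;
  formZr : forall a u v, form u (a *: v) = a * form u v;
  form_conj : forall u v, (form u v)^* = form v u;
  form_ge0 : forall u, 0 <= form u u }.

Section SemiInnerProductTheory.
Variables (C : numClosedFieldType) (U : lmodType C) (form : U -> U -> C).
Hypothesis hform : semi_inner_product form.

Lemma formZl a u v : form (a *: u) v = a^* * form u v.
Proof. by rewrite -form_conj // formZr // rmorphM /= form_conj. Qed.

Lemma formDl u v w : form (u + v) w = form u w + form v w.
Proof. by rewrite -form_conj // formDr // rmorphD /= !form_conj. Qed.

Lemma form_expand u v t : t * form u v = (t * form u v)^* ->
  form (u + t *: v) (u + t *: v) =
  form u u + 2 * (t * form u v) + t^* * t * form v v.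
Proof.
move=> real_tx; rewrite formDl !formDr // !formZl !formZr //.
have -> : t^* * form v u = (t * form u v)^* by rewrite rmorphM /= form_conj.
by rewrite -real_tx mulrA; ring.
Qed.

Lemma CauchySchwarz_semidef u v : `|form u v| ^+ 2 <= form u u * form v v.
Proof.
set a := form u u; set b := form v v; set x := form u v.
have a_real : a^* = a := form_conj hform u u.
have [b0 | b_gt0] : b = 0 \/ 0 < b.
  by have := form_ge0 hform v; rewrite le0r => /orP[/eqP|]; [left|right].
- have -> : x = 0.
    apply/eqP/negPn/negP => x0.
    pose t := - (a + 1) / (2 * x).
    have tx : t * x = - (a + 1) / 2 by rewrite /t; field.
    have := form_ge0 hform (u + t *: v).
    rewrite form_expand -/a -/b -/x tx ?b0.
      have -> : a + 2 * (- (a + 1) / 2) + t^* * t * 0 = -1 by field.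
      by rewrite ler0N1.
    by rewrite rmorphM /= fmorphV rmorphN rmorphD /= a_real rmorph1 rmorph_nat.
  by rewrite normr0 expr0n /= mulr_ge0 // form_ge0.
- pose t := - x^* / b.
  have b0 : b != 0 by rewrite gt_eqF.
  have tx : t * x = - `|x| ^+ 2 / b by rewrite normCK /t; field.
  have := form_ge0 hform (u + t *: v).
  rewrite form_expand -/a -/b -/x; last first.
    apply/esym/CrealP; rewrite tx.
    by rewrite rpredM ?rpredN ?rpredV ?rpredX ?normr_real ?gtr0_real.
  have -> : a + 2 * (t * x) + t^* * t * b = a - `|x| ^+ 2 / b.
    rewrite tx /t rmorphM /= fmorphV rmorphN /= conjCK (form_conj hform v v) normCK.
    by rewrite -/b; field.
  by rewrite subr_ge0 ler_pdivrMr.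
Qed.

End SemiInnerProductTheory.

Section RankOneUpdate.
Variables (C : numClosedFieldType) (U : lmodType C) (form : U -> U -> C).
Hypothesis hform : semi_inner_product form.
Variables (p : C) (v : U).
Hypothesis p_ge0 : 0 <= p.

Definition rank_one_update (s t : U) := form s t + p * form s v * form v t.

Let p_real : p^* = p.
Proof. exact/CrealP/ger0_real. Qed.

Lemma semi_inner_product_rank_one_update : semi_inner_product rank_one_update.
Proof.
rewrite /rank_one_update; split => [s t w | a s t | s t | s].
- by rewrite !formDr //; ring.
- by rewrite !formZr //; ring.
- by rewrite rmorphD !rmorphM /= !form_conj // p_real; ring.
- rewrite -mulrA -(form_conj hform v s) -normCKC.
  by rewrite addr_ge0 ?mulr_ge0 ?exprn_ge0 ?form_ge0.
Qed.

(* [u - k *: v] is (I + p v v^H)^-1 u. *)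
Lemma rank_one_update_inverse u t :
  let k := p * form v u / (1 + p * form v v) in
  rank_one_update (u - k *: v) t = form u t.
Proof.
move=> k; have pb_gt0 : 0 < 1 + p * form v v.
  by rewrite ltr_pwDl ?mulr_ge0 ?form_ge0.
have kE : k^* = p * form u v / (1 + p * form v v).
  rewrite !rmorphM fmorphV rmorphD rmorph1 /= !rmorphM /= p_real.
  by rewrite !form_conj.
rewrite /rank_one_update -scaleNr !formDl // !formZl // rmorphN /= kE.
by field; rewrite gt_eqF.
Qed.

Lemma CauchySchwarz_rank_one_update u w :
  `|form u w| ^+ 2 <=
    (form u u - p * `|form v u| ^+ 2 / (1 + p * form v v)) *
    (form w w + p * `|form v w| ^+ 2).
Proof.
have := CauchySchwarz_semidef semi_inner_product_rank_one_update
  (u - (p * form v u / (1 + p * form v v)) *: v) w.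
rewrite !rank_one_update_inverse /rank_one_update -scaleNr formDr // formZr //.
by rewrite !normCKC !form_conj //; congr (_ <= _ * _); ring.
Qed.

End RankOneUpdate.

(** * Square-integrable functions *)

Section SquareIntegrable.
Context d (T : measurableType d) (R : realType).
Variables (mu : {measure set T -> \bar R}) (D : set T).
Hypothesis mD : measurable D.

Lemma integrableZl_EFin k (f : T -> R) : mu.-integrable D (EFin \o f) ->
  mu.-integrable D (EFin \o (fun x => k * f x)).
Proof. by move=> /(integrableZl mD k); apply: eq_integrable. Qed.

Lemma integrableD_EFin (f g : T -> R) :
  mu.-integrable D (EFin \o f) -> mu.-integrable D (EFin \o g) ->
  mu.-integrable D (EFin \o (fun x => f x + g x)).
Proof. by move=> If Ig; apply: eq_integrable (integrableD mD If Ig). Qed.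

Lemma integrableB_EFin (f g : T -> R) :
  mu.-integrable D (EFin \o f) -> mu.-integrable D (EFin \o g) ->
  mu.-integrable D (EFin \o (fun x => f x - g x)).
Proof. by move=> If Ig; apply: eq_integrable (integrableB mD If Ig). Qed.

Definition square_integrable (f : T -> R) :=
  measurable_fun D f /\ mu.-integrable D (EFin \o (fun x => f x ^+ 2)).

Lemma integrable_mul_square_integrable f g :
  square_integrable f -> square_integrable g ->
  mu.-integrable D (EFin \o (fun x => f x * g x)).
Proof.
move=> [mf If] [mg Ig].
apply: (le_integrable mD _ _ (integrableD mD If Ig)) => [|x _ /=].
  by apply/measurable_EFinP; apply: measurable_funM.
rewrite lee_fin normrM [X in _ <= X]ger0_norm ?addr_ge0 ?sqr_ge0 //.
rewrite -[f x ^+ 2]real_normK ?num_real // -[g x ^+ 2]real_normK ?num_real //.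
have := sqr_ge0 (`|f x| - `|g x|); rewrite sqrrB mulr2n.
have := mulr_ge0 (normr_ge0 (f x)) (normr_ge0 (g x)).
lra.
Qed.

Lemma square_integrable0 : square_integrable (fun=> 0).
Proof.
split; first exact: measurable_cst.
by apply: (eq_integrable mD _ _ _ (integrable0 mu D)) => x _ /=; rewrite expr0n.
Qed.

Lemma square_integrableZ k f :
  square_integrable f -> square_integrable (fun x => k * f x).
Proof.
move=> [mf If]; split; first exact: measurable_funM.
apply: (eq_integrable mD _ _ _ (integrableZl mD (k ^+ 2) If)) => x _ /=.
by rewrite exprMn.
Qed.

Lemma square_integrableD f g : square_integrable f -> square_integrable g ->
  square_integrable (fun x => f x + g x).
Proof.
move=> sf sg; split; first exact: measurable_funD sf.1 sg.1.
have Ifg := integrableZl mD 2 (integrable_mul_square_integrable sf sg).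
apply: (eq_integrable mD _ _ _ (integrableD mD (integrableD mD sf.2 sg.2) Ifg)) => x _ /=.
by rewrite -EFinM -!EFinD; congr EFin; ring.
Qed.

End SquareIntegrable.

(** * Complex numbers and the L^2 product *)

Section ComplexParts.
Variable R : rcfType.
Implicit Types z w : R[i].

Lemma ReD z w : complex.Re (z + w) = complex.Re z + complex.Re w.
Proof. by case: z; case: w. Qed.

Lemma ImD z w : complex.Im (z + w) = complex.Im z + complex.Im w.
Proof. by case: z; case: w. Qed.

Lemma ReM z w :
  complex.Re (z * w) = complex.Re z * complex.Re w - complex.Im z * complex.Im w.
Proof. by case: z; case: w. Qed.

Lemma ImM z w :
  complex.Im (z * w) = complex.Re z * complex.Im w + complex.Im z * complex.Re w.
Proof. by case: z; case: w. Qed.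

Lemma ReJ z : complex.Re z^* = complex.Re z.
Proof. by case: z. Qed.

Lemma ImJ z : complex.Im z^* = - complex.Im z.
Proof. by case: z. Qed.

End ComplexParts.

Section ComplexModulus.
Variable R : realType.
Implicit Types z : R[i].

Lemma cconjE z : cconj z = z^*.
Proof. by case: z. Qed.

Lemma cabs2J z : cabs2 z^* = cabs2 z.
Proof. by rewrite /cabs2 ReJ ImJ sqrrN. Qed.

Lemma cabs2E z : (cabs2 z)%:C%C = `|z| ^+ 2.
Proof. exact: add_Re2_Im2. Qed.

Lemma cabs2_ge0 z : 0 <= cabs2 z.
Proof. by rewrite addr_ge0 ?sqr_ge0. Qed.

Lemma cabs2M z w : cabs2 (z * w) = cabs2 z * cabs2 w.
Proof. by rewrite /cabs2 ReM ImM; ring. Qed.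

Lemma cabs2_divr z (r : R) : r != 0 -> cabs2 (z / r%:C%C) = cabs2 z / r ^+ 2.
Proof. by move=> r0; case: z => a b; rewrite /cabs2 /=; field. Qed.

End ComplexModulus.

Section ChannelGain.
Variable R : realType.

Definition channel_coef (Au sigma k0 eta : R) : R[i] :=
  (Num.sqrt Au / sigma)%:C%C * ('i * (k0 * eta / Num.sqrt (4 * pi))%:C)%C.

Definition channel_gain (Au sigma k0 eta : R) :=
  Au * k0 ^+ 2 * eta ^+ 2 / (4 * pi * sigma ^+ 2).

Lemma channel_gain_gt0 (Au sigma k0 eta : R) :
  0 < Au -> 0 < sigma -> 0 < k0 -> 0 < eta -> 0 < channel_gain Au sigma k0 eta.
Proof. by move=> *; rewrite divr_gt0 ?mulr_gt0 ?exprn_gt0 ?pi_gt0. Qed.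

Lemma cabs2_channel_coef (Au sigma k0 eta : R) : 0 <= Au -> sigma != 0 ->
  cabs2 (channel_coef Au sigma k0 eta) = channel_gain Au sigma k0 eta.
Proof.
(* [pi] is abstracted, as [field] would otherwise unfold it *)
move=> Au_ge0 sigma0; rewrite /channel_gain /channel_coef.
move: (pi : R) (@pi_gt0 R) => p p_gt0.
transitivity ((Num.sqrt Au / sigma * (k0 * eta / Num.sqrt (4 * p))) ^+ 2).
  by rewrite /cabs2 /=; ring.
rewrite exprMn !expr_div_n !sqr_sqrtr ?mulr_ge0 ?(ltW p_gt0) //.
by field; rewrite sigma0 gt_eqF.
Qed.

End ChannelGain.

Section ComplexL2.
Variables (R : realType) (A : set (R3 R)).
Hypothesis mA : measurable A.
Local Notation mu := (@leb3 R).
Local Notation sqi := (square_integrable mu A).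

Definition cintegrable (F : R3 R -> R[i]) :=
  mu.-integrable A (EFin \o (fun x => complex.Re (F x))) /\
  mu.-integrable A (EFin \o (fun x => complex.Im (F x))).

Lemma cintD F G : cintegrable F -> cintegrable G ->
  cint A (fun x => F x + G x) = cint A F + cint A G.
Proof.
move=> [ReF ImF] [ReG ImG]; rewrite /cint /rint.
under eq_Rintegral do rewrite ReD.
under [X in (_ +i* X)%C]eq_Rintegral do rewrite ImD.
by rewrite !RintegralD.
Qed.

Lemma cintZ a F : cintegrable F -> cint A (fun x => a * F x) = a * cint A F.
Proof.
move=> [ReF ImF]; rewrite /cint /rint.
under eq_Rintegral do rewrite ReM.
under [X in (_ +i* X)%C]eq_Rintegral do rewrite ImM.
rewrite !RintegralB ?RintegralD ?RintegralZl //; try exact: integrableZl_EFin.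
by case: a.
Qed.

Lemma cL2P f : cL2 A f <->
  sqi (fun x => complex.Re (f x)) /\ sqi (fun x => complex.Im (f x)).
Proof.
split => [[mRe mIm If] | [[mRe IRe] [mIm IIm]]].
  split; split => //; apply: (le_integrable _ _ _ If) => [||x _ /=] //;
    do ?[by apply/measurable_EFinP; apply: measurable_funX];
    by rewrite lee_fin !ger0_norm ?addr_ge0 ?sqr_ge0 // /cabs2 ?lerDl ?lerDr sqr_ge0.
split => //; apply: (eq_integrable _ _ _ _ (integrableD _ IRe IIm)) => //.
Qed.

Lemma cL2_0 : cL2 A (fun=> 0).
Proof. by apply/cL2P; split; exact: square_integrable0. Qed.

Lemma cL2D f g : cL2 A f -> cL2 A g -> cL2 A (fun x => f x + g x).
Proof.
move=> /cL2P[Ref Imf] /cL2P[Reg Img]; apply/cL2P.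
by split; [under eq_fun do rewrite ReD | under eq_fun do rewrite ImD];
  exact: square_integrableD.
Qed.

Lemma cL2Z a f : cL2 A f -> cL2 A (fun x => a * f x).
Proof.
move=> /cL2P[Ref Imf]; apply/cL2P.
split; [under eq_fun do rewrite ReM -mulNr | under eq_fun do rewrite ImM];
  by apply: square_integrableD => //; apply: square_integrableZ.
Qed.

Lemma cL2_conj f : cL2 A f -> cL2 A (fun x => (f x)^*).
Proof.
move=> /cL2P[Ref Imf]; apply/cL2P; split; first by under eq_fun do rewrite ReJ.
by under eq_fun do rewrite ImJ -mulN1r; apply: square_integrableZ.
Qed.

Lemma cintegrable_conj_mul f g : cL2 A f -> cL2 A g ->
  cintegrable (fun x => (f x)^* * g x).
Proof.
move=> /cL2P[Ref Imf] /cL2P[Reg Img]; split.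
- under eq_fun do rewrite ReM ReJ ImJ mulNr opprK.
  by apply: integrableD_EFin => //; apply: integrable_mul_square_integrable.
- under eq_fun do rewrite ImM ReJ ImJ mulNr.
  by apply: integrableB_EFin => //; apply: integrable_mul_square_integrable.
Qed.

Definition l2dot f g := cint A (fun x => (f x)^* * g x).

Lemma l2dotDr f g h : cL2 A f -> cL2 A g -> cL2 A h ->
  l2dot f (fun x => g x + h x) = l2dot f g + l2dot f h.
Proof.
move=> Lf Lg Lh; rewrite /l2dot -cintD; try exact: cintegrable_conj_mul.
by under eq_fun do rewrite mulrDr.
Qed.

Lemma l2dotZr a f g : cL2 A f -> cL2 A g ->
  l2dot f (fun x => a * g x) = a * l2dot f g.
Proof.
move=> Lf Lg; rewrite /l2dot -cintZ; try exact: cintegrable_conj_mul.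
by under eq_fun do rewrite mulrCA.
Qed.

Lemma l2dot_conj f g : cL2 A f -> cL2 A g -> (l2dot f g)^* = l2dot g f.
Proof.
move=> Lf Lg; have [_ IIm] := cintegrable_conj_mul Lf Lg.
rewrite /l2dot /cint /rint; apply/eqP; rewrite eq_complex /=; apply/andP; split.
  by apply/eqP/eq_Rintegral => x _; rewrite !ReM !ReJ !ImJ; ring.
apply/eqP; rewrite -mulN1r -RintegralZl //; apply/eq_Rintegral => x _.
by rewrite !ImM !ReJ !ImJ; ring.
Qed.

Lemma l2dot_self f : l2dot f f = (rint A (fun x => cabs2 (f x)))%:C%C.
Proof.
rewrite /l2dot /cint /rint; apply/eqP; rewrite eq_complex /=; apply/andP; split.
  by apply/eqP/eq_Rintegral => x _; rewrite ReM ReJ ImJ /cabs2; ring.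
apply/eqP; under eq_Rintegral do rewrite ImM ReJ ImJ mulNr mulrC subrr.
by rewrite Rintegral_cst // mul0r.
Qed.

Lemma l2dot_ge0 f : 0 <= l2dot f f.
Proof.
rewrite l2dot_self ler0c; apply: Rintegral_ge0 => x _.
by rewrite addr_ge0 ?sqr_ge0.
Qed.

Lemma rint_cabs2_conj h :
  rint A (fun x => cabs2 (h x)^*) = rint A (fun x => cabs2 (h x)).
Proof. by apply: eq_Rintegral => x _; rewrite cabs2J. Qed.

(* [l2dot] is sesquilinear only on L^2 functions; pulling it back along
   [lincomb] gives a semi-inner product on a genuine vector space. *)
Section GramForm.
Variables (n : nat) (f : 'I_n -> R3 R -> R[i]).
Hypothesis Lf : forall i, cL2 A (f i).

Definition lincomb (xi : 'rV[R[i]]_n) : R3 R -> R[i] := \sum_i xi 0 i *: f i.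

Lemma lincombE xi x : lincomb xi x = \sum_i xi 0 i * f i x.
Proof. by rewrite /lincomb fct_sumE. Qed.

Lemma cL2_lincomb xi : cL2 A (lincomb xi).
Proof.
apply: (big_ind (cL2 A)) => [|g h|i _]; first exact: cL2_0.
  exact: cL2D.
exact: cL2Z.
Qed.

Lemma lincombD xi zeta :
  lincomb (xi + zeta) = (fun x => lincomb xi x + lincomb zeta x).
Proof.
apply/funext => x; rewrite !lincombE -big_split /=.
by apply: eq_bigr => i _; rewrite mxE mulrDl.
Qed.

Lemma lincombZ a xi : lincomb (a *: xi) = (fun x => a * lincomb xi x).
Proof.
apply/funext => x; rewrite !lincombE mulr_sumr.
by apply: eq_bigr => i _; rewrite mxE mulrA.
Qed.

Lemma lincomb_delta i : lincomb (delta_mx 0 i) = f i.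
Proof.
apply/funext => x; rewrite lincombE (bigD1 i) //= big1 => [|j ji].
  by rewrite mxE !eqxx mul1r addr0.
by rewrite mxE (negbTE ji) andbF mul0r.
Qed.

Definition gram xi zeta := l2dot (lincomb xi) (lincomb zeta).

Lemma semi_inner_product_gram : semi_inner_product gram.
Proof.
split => [xi zeta eta | a xi zeta | xi zeta | xi]; rewrite /gram.
- by rewrite lincombD; apply: l2dotDr; apply: cL2_lincomb.
- by rewrite lincombZ; apply: l2dotZr; apply: cL2_lincomb.
- by apply: l2dot_conj; apply: cL2_lincomb.
- exact: l2dot_ge0.
Qed.

End GramForm.

Lemma l2dot_CauchySchwarz_rank_one_update p u v w :
  cL2 A u -> cL2 A v -> cL2 A w -> 0 <= p ->
  `|l2dot u w| ^+ 2 <=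
    (l2dot u u - p * `|l2dot v u| ^+ 2 / (1 + p * l2dot v v)) *
    (l2dot w w + p * `|l2dot v w| ^+ 2).
Proof.
move=> Lu Lv Lw p_ge0.
pose f (i : 'I_3) := nth (fun=> 0) [:: u; v; w] i.
have Lf i : cL2 A (f i) by case: i => [[|[|[|]]]].
have := CauchySchwarz_rank_one_update (semi_inner_product_gram Lf)
  (delta_mx 0 1) p_ge0 (delta_mx 0 0) (delta_mx 0 2).
by rewrite /gram !lincomb_delta.
Qed.

Lemma cint_mul_CauchySchwarz_rank_one_update (p : R) h1 h2 j :
  cL2 A h1 -> cL2 A h2 -> cL2 A j -> 0 <= p ->
  cabs2 (cint A (fun x => h1 x * j x)) <=
    (rint A (fun x => cabs2 (h1 x)) -
       p * cabs2 (cint A (fun x => cconj (h1 x) * h2 x)) /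
       (1 + p * rint A (fun x => cabs2 (h2 x)))) *
    (rint A (fun x => cabs2 (j x)) + p * cabs2 (cint A (fun x => h2 x * j x))).
Proof.
move=> L1 L2 Lj p_ge0; have pC_ge0 : 0 <= p%:C%C by rewrite ler0c.
have lJ h g : l2dot (fun x => (h x)^*) g = cint A (fun x => h x * g x).
  by rewrite /l2dot; under eq_fun do rewrite conjCK.
have := l2dot_CauchySchwarz_rank_one_update (cL2_conj L1) (cL2_conj L2) Lj pC_ge0.
rewrite !l2dot_self !rint_cabs2_conj !lJ.
have -> : (fun x => h2 x * (h1 x)^*) = (fun x => cconj (h1 x) * h2 x).
  by apply/funext => x; rewrite mulrC cconjE.
rewrite -!cabs2E.
(* generalized, since the morphism lemmas would otherwise unfold [cabs2] *)
move: (cabs2 _) (cabs2 _) (cabs2 _) => c1 c2 c3.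
by rewrite -lecR !(rmorphM, rmorphD, rmorphN, fmorphV, rmorph1).
Qed.

Lemma cint_mul_CauchySchwarz h j : cL2 A h -> cL2 A j ->
  cabs2 (cint A (fun x => h x * j x)) <=
    rint A (fun x => cabs2 (h x)) * rint A (fun x => cabs2 (j x)).
Proof.
move=> Lh Lj; have := cint_mul_CauchySchwarz_rank_one_update Lh Lh Lj (lexx 0).
by rewrite !mul0r subr0 addr0.
Qed.

Lemma cint_conj_mul_CauchySchwarz h1 h2 : cL2 A h1 -> cL2 A h2 ->
  cabs2 (cint A (fun x => cconj (h1 x) * h2 x)) <=
    rint A (fun x => cabs2 (h1 x)) * rint A (fun x => cabs2 (h2 x)).
Proof.
move=> L1 L2; rewrite -rint_cabs2_conj.
have -> : (fun x => cconj (h1 x) * h2 x) = (fun x => (h1 x)^* * h2 x).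
  by apply/funext => x; rewrite cconjE.
exact/cint_mul_CauchySchwarz/L2/cL2_conj.
Qed.

Lemma rint_cabs2Z a f : cL2 A f ->
  rint A (fun x => cabs2 (a * f x)) = cabs2 a * rint A (fun x => cabs2 (f x)).
Proof.
case=> _ _ If; rewrite /rint -RintegralZl //.
by apply: eq_Rintegral => x _; rewrite cabs2M.
Qed.

Lemma cint_conj_mulZ a b f g : cL2 A f -> cL2 A g ->
  cint A (fun x => cconj (a * f x) * (b * g x)) =
  a^* * b * cint A (fun x => cconj (f x) * g x).
Proof.
move=> Lf Lg; under eq_fun do rewrite cconjE.
have -> : (fun x => cconj (f x) * g x) = (fun x => (f x)^* * g x).
  by apply/funext => x; rewrite cconjE.
rewrite -cintZ; last exact: cintegrable_conj_mul.
by congr cint; apply/funext => x; rewrite rmorphM /=; ring.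
Qed.

Definition normalized_channel (Au sigma k0 eta : R) (G : R3 R -> R[i]) x :=
  (Num.sqrt Au / sigma)%:C%C * (('i * (k0 * eta / Num.sqrt (4 * pi))%:C)%C * G x).

Section NormalizedChannel.
Variables (k0 eta : R).

Let normalized_channelE Au sigma G : normalized_channel Au sigma k0 eta G =
  (fun x => channel_coef Au sigma k0 eta * G x).
Proof. by apply/funext => x; rewrite /normalized_channel mulrA. Qed.

Lemma cL2_normalized_channel Au sigma G :
  cL2 A G -> cL2 A (normalized_channel Au sigma k0 eta G).
Proof. by rewrite normalized_channelE; apply: cL2Z. Qed.

Lemma rint_cabs2_normalized_channel Au sigma G :
  0 <= Au -> sigma != 0 -> cL2 A G ->
  rint A (fun x => cabs2 (normalized_channel Au sigma k0 eta G x)) =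
  channel_gain Au sigma k0 eta * rint A (fun x => cabs2 (G x)).
Proof.
by move=> *; rewrite normalized_channelE rint_cabs2Z ?cabs2_channel_coef.
Qed.

Lemma cabs2_cint_conj_mul_normalized_channel Au1 sigma1 Au2 sigma2 G1 G2 :
  0 <= Au1 -> sigma1 != 0 -> 0 <= Au2 -> sigma2 != 0 -> cL2 A G1 -> cL2 A G2 ->
  cabs2 (cint A (fun x => cconj (normalized_channel Au1 sigma1 k0 eta G1 x) *
                          normalized_channel Au2 sigma2 k0 eta G2 x)) =
  channel_gain Au1 sigma1 k0 eta * channel_gain Au2 sigma2 k0 eta *
  cabs2 (cint A (fun x => cconj (G1 x) * G2 x)).
Proof.
move=> *; rewrite !normalized_channelE cint_conj_mulZ // 2!cabs2M cabs2J.
by rewrite !cabs2_channel_coef.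
Qed.

End NormalizedChannel.

End ComplexL2.

(** * Uplink-downlink duality *)

Section Duality.
Variables (R : realFieldType) (nH1 nH2 c12 a11 a21 a22 : R).
Hypotheses (nH1_gt0 : 0 < nH1) (nH2_gt0 : 0 < nH2).
Hypotheses (a21_ge0 : 0 <= a21) (a22_ge0 : 0 <= a22) (c12_le : c12 <= nH1 * nH2).

Definition dual_power2 := a22 / (nH2 * (1 + a21)).
Definition mmse_gain1 := nH1 - dual_power2 * c12 / (1 + dual_power2 * nH2).
Definition dual_power1 := a11 / mmse_gain1.

Lemma dual_power2_ge0 : 0 <= dual_power2.
Proof. by rewrite divr_ge0 ?mulr_ge0 ?addr_ge0 // ltW. Qed.

Let a21_gt0 : 0 < 1 + a21.
Proof. by move: a21_ge0; lra. Qed.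

Let sic_gt0 : 0 < 1 + dual_power2 * nH2.
Proof. by have := mulr_ge0 dual_power2_ge0 (ltW nH2_gt0); lra. Qed.

Lemma mmse_gain1_gt0 : 0 < mmse_gain1.
Proof.
have -> : mmse_gain1 =
    (nH1 + dual_power2 * (nH1 * nH2 - c12)) / (1 + dual_power2 * nH2).
  by rewrite /mmse_gain1; field; rewrite gt_eqF.
apply: divr_gt0; last exact: sic_gt0.
have : 0 <= dual_power2 * (nH1 * nH2 - c12).
  by rewrite mulr_ge0 ?dual_power2_ge0 ?subr_ge0.
by move=> h; apply: (lt_le_trans nH1_gt0); rewrite lerDl.
Qed.

Lemma dual_sinr2 : dual_power2 * nH2 = a22 / (1 + a21).
Proof.
by rewrite /dual_power2; field; rewrite !gt_eqF.
Qed.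

Lemma dual_sinr1 : dual_power1 * mmse_gain1 = a11.
Proof. by rewrite /dual_power1 divfK // gt_eqF // mmse_gain1_gt0. Qed.

Lemma dual_power_le q1 q2 :
  a11 <= mmse_gain1 * (q1 + dual_power2 * a21) -> a22 <= nH2 * q2 ->
  dual_power1 + dual_power2 <= q1 + q2.
Proof.
move=> a11_le a22_le.
have P1_le : dual_power1 <= q1 + dual_power2 * a21.
  by rewrite /dual_power1 ler_pdivrMr ?mmse_gain1_gt0 // mulrC.
have P2_le : dual_power2 * (1 + a21) <= q2.
  have -> : dual_power2 * (1 + a21) = a22 / nH2.
    by rewrite /dual_power2; field; rewrite !gt_eqF.
  by rewrite ler_pdivrMr // mulrC.
move: P2_le; rewrite mulrDr mulr1; lra.
Qed.

End Duality.

Lemma sic_dpc_sum_rate_duality (R : realType)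
    (b1 b2 g1 g2 i12 nH1 nH2 c12 a11 a21 a22 q1 q2 : R) :
  0 < b1 -> 0 < b2 -> 0 < g1 -> 0 < g2 -> 0 <= a21 -> 0 <= a22 ->
  nH1 = b1 * g1 -> nH2 = b2 * g2 -> c12 = b1 * b2 * i12 -> c12 <= nH1 * nH2 ->
  a11 <= mmse_gain1 nH1 nH2 c12 a21 a22 * (q1 + dual_power2 nH2 a21 a22 * a21) ->
  a22 <= nH2 * q2 ->
  let P1 := dual_power1 nH1 nH2 c12 a11 a21 a22 in
  let P2 := dual_power2 nH2 a21 a22 in
  log2 (1 + b1 * P1 * g1 * (1 - b2 * P2 * g2 * (i12 / (g1 * g2)) / (1 + b2 * P2 * g2)))
    + log2 (1 + b2 * P2 * g2)
  = log2 (1 + a11) + log2 (1 + a22 / (1 + a21))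
  /\ P1 + P2 <= q1 + q2.
Proof.
move=> b1_gt0 b2_gt0 g1_gt0 g2_gt0 a21_ge0 a22_ge0 nH1E nH2E c12E CS12 CS1 CS2 P1 P2.
have nH1_gt0 : 0 < nH1 by rewrite nH1E mulr_gt0.
have nH2_gt0 : 0 < nH2 by rewrite nH2E mulr_gt0.
have P2_ge0 : 0 <= P2 by apply: dual_power2_ge0.
have sic_gt0 : 0 < 1 + P2 * nH2 by have := mulr_ge0 P2_ge0 (ltW nH2_gt0); lra.
split; last exact: dual_power_le.
have -> : b2 * P2 * g2 = P2 * nH2 by rewrite nH2E; ring.
have -> : b1 * P1 * g1 * (1 - P2 * nH2 * (i12 / (g1 * g2)) / (1 + P2 * nH2)) =
    P1 * mmse_gain1 nH1 nH2 c12 a21 a22.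
  by rewrite /mmse_gain1 -/P2 nH1E nH2E c12E; field; rewrite -nH2E !gt_eqF.
by rewrite /P1 /P2 dual_sinr1 ?dual_sinr2.
Qed.

Theorem theorem4 (R : realType) (A : set (R3 R)) (k0 eta : R)
  (G1 G2 : R3 R -> R[i]) (Au1 Au2 sigma1 sigma2 P : R)
  (J1 J2 : R3 R -> R[i]) :
  measurable A -> (0 < @leb3 R A)%E -> (@leb3 R A < +oo)%E ->
  0 < k0 -> 0 < eta ->
  cL2 A G1 -> cL2 A G2 ->
  0 < rint A (fun x => cabs2 (G1 x)) ->
  0 < rint A (fun x => cabs2 (G2 x)) ->
  0 < Au1 -> 0 < Au2 -> 0 < sigma1 -> 0 < sigma2 ->
  0 < P ->
  cL2 A J1 -> cL2 A J2 ->
  rint A (fun x => cabs2 (J1 x)) + rint A (fun x => cabs2 (J2 x)) <= P ->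
  let g1 := rint A (fun x => cabs2 (G1 x)) in
  let g2 := rint A (fun x => cabs2 (G2 x)) in
  let c := ('i * (k0 * eta / Num.sqrt (4 * pi))%:C)%C in
  let H1 := fun x => c * G1 x in
  let H2 := fun x => c * G2 x in
  let Hh1 := fun x => (Num.sqrt Au1 / sigma1)%:C%C * H1 x in
  let Hh2 := fun x => (Num.sqrt Au2 / sigma2)%:C%C * H2 x in
  let rho := cint A (fun x => cconj (G1 x) * G2 x) / (Num.sqrt (g1 * g2))%:C%C in
  let nH1 := rint A (fun x => cabs2 (Hh1 x)) in
  let nH2 := rint A (fun x => cabs2 (Hh2 x)) in
  let a11 := cabs2 (cint A (fun x => Hh1 x * J1 x)) in
  let a21 := cabs2 (cint A (fun x => Hh2 x * J1 x)) in
  let a22 := cabs2 (cint A (fun x => Hh2 x * J2 x)) in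
  let c12 := cabs2 (cint A (fun x => cconj (Hh1 x) * Hh2 x)) in
  let P2 := a22 / (nH2 * (1 + a21)) in
  let P1 := a11 / (nH1 - P2 * c12 / (1 + P2 * nH2)) in
  let gam1 := Au1 * k0 ^+ 2 * eta ^+ 2 / (4 * pi * sigma1 ^+ 2) * P1 in
  let gam2 := Au2 * k0 ^+ 2 * eta ^+ 2 / (4 * pi * sigma2 ^+ 2) * P2 in
  log2 (1 + gam1 * g1 * (1 - gam2 * g2 * cabs2 rho / (1 + gam2 * g2)))
    + log2 (1 + gam2 * g2)
  = log2 (1 + a11) + log2 (1 + a22 / (1 + a21))
  /\ P1 + P2 <= rint A (fun x => cabs2 (J1 x)) + rint A (fun x => cabs2 (J2 x))
  /\ rint A (fun x => cabs2 (J1 x)) + rint A (fun x => cabs2 (J2 x)) <= P.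
Proof.
move=> mA _ _ k0_gt0 eta_gt0 LG1 LG2 g1_gt0 g2_gt0 Au1_gt0 Au2_gt0 s1_gt0 s2_gt0 _
  LJ1 LJ2 HP g1 g2 c H1 H2 Hh1 Hh2 rho nH1 nH2 a11 a21 a22 c12 P2 P1 gam1 gam2.
have [Au1_ge0 Au2_ge0] := (ltW Au1_gt0, ltW Au2_gt0).
have [s1_neq0 s2_neq0] := (lt0r_neq0 s1_gt0, lt0r_neq0 s2_gt0).
have LHh1 : cL2 A Hh1 := cL2_normalized_channel mA k0 eta Au1 sigma1 LG1.
have LHh2 : cL2 A Hh2 := cL2_normalized_channel mA k0 eta Au2 sigma2 LG2.
have nH1E : nH1 = channel_gain Au1 sigma1 k0 eta * g1 :=
  rint_cabs2_normalized_channel mA k0 eta Au1_ge0 s1_neq0 LG1.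
have nH2E : nH2 = channel_gain Au2 sigma2 k0 eta * g2 :=
  rint_cabs2_normalized_channel mA k0 eta Au2_ge0 s2_neq0 LG2.
pose I := cint A (fun x => cconj (G1 x) * G2 x).
have c12E : c12 =
    channel_gain Au1 sigma1 k0 eta * channel_gain Au2 sigma2 k0 eta * cabs2 I :=
  cabs2_cint_conj_mul_normalized_channel mA k0 eta
    Au1_ge0 s1_neq0 Au2_ge0 s2_neq0 LG1 LG2.
have rhoE : cabs2 rho = cabs2 I / (g1 * g2).
  by rewrite cabs2_divr ?sqr_sqrtr ?gt_eqF ?sqrtr_gt0 ?mulr_ge0 ?mulr_gt0 ?ltW.
have P2_ge0 : 0 <= P2.
  by apply: dual_power2_ge0; rewrite ?cabs2_ge0 // nH2E mulr_gt0 ?channel_gain_gt0.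
have CS12 : c12 <= nH1 * nH2 := cint_conj_mul_CauchySchwarz mA LHh1 LHh2.
have CS1 := cint_mul_CauchySchwarz_rank_one_update mA LHh1 LHh2 LJ1 P2_ge0.
have CS2 : a22 <= nH2 * _ := cint_mul_CauchySchwarz mA LHh2 LJ2.
have [rate power] := sic_dpc_sum_rate_duality
  (channel_gain_gt0 Au1_gt0 s1_gt0 k0_gt0 eta_gt0)
  (channel_gain_gt0 Au2_gt0 s2_gt0 k0_gt0 eta_gt0)
  g1_gt0 g2_gt0 (cabs2_ge0 _) (cabs2_ge0 _) nH1E nH2E c12E CS12 CS1 CS2.
by rewrite rhoE; split; last split.
Qed.
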